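(* Let $\bm\sigma=\sigma_1\bm e_1+\dots+\sigma_r\bm e_r\in\mathbb{Z}^r$ be a changemaker vector with non-trivial stable coefficients ($\sigma_r\ge2$) such that $L=\langle\bm\sigma\rangle^\perp\subseteq\mathbb{Z}^r$ admits an obtuse superbase. Suppose that for some $k$ the coefficients satisfy $\sigma_k=\sigma_{k+1}=\sigma_{k+2}=\sigma_{k+3}$. If $\bm z=\sum z_i\bm e_i\in L$ is an irreducible vector with $z_k=z_{k+1}$ and $z_{k+2}=z_{k+3}$, then $z_{k+2}=z_{k+1}$.
   Context: $\mathbb{Z}^r$ has the standard pairing. A changemaker vector is $\bm\sigma=\sum\sigma_i\bm e_i$ with $\sigma_1=1$ and $\sigma_{i-1}\le\sigma_i\le1+\sigma_1+\dots+\sigma_{i-1}$. An obtuse superbase of a rank-$k$ lattice is a spanning set $\{v_0,\dots,v_k\}$ with $v_i\cdot v_j\le0$ for $i\ne j$ and $\sum v_i=0$. A non-zero $v\in L$ is irreducible if whenever $v=x+y$ with $x,y\in L$ non-zero, $x\cdot y\le -1$. *)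

(* Vectors of Z^r are row vectors 'rV[int]_r, coordinates
   indexed 0-based by 'I_r (paper's e_{i+1} is our index i). *)
From mathcomp Require Import all_boot all_order all_algebra.
Set Implicit Arguments. Unset Strict Implicit. Unset Printing Implicit Defensive.
Import Order.TTheory GRing.Theory Num.Theory.
Local Open Scope ring_scope.

Definition dotz (r : nat) (x y : 'rV[int]_r) : int := \sum_(i < r) x ord0 i * y ord0 i.

Definition changemaker (r : nat) (s : 'rV[int]_r) : Prop :=
  (forall i : 'I_r, val i = 0%N -> s ord0 i = 1) /\
  (forall i j : 'I_r, val j = (val i).+1 ->
     s ord0 i <= s ord0 j /\
     s ord0 j <= 1 + \sum_(l < r | (val l < val j)%N) s ord0 l).

Definition orth_lattice (r : nat) (s : 'rV[int]_r) (x : 'rV[int]_r) : Prop :=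
  dotz x s = 0.

Definition obtuse_superbase (r n : nat) (L : 'rV[int]_r -> Prop)
    (v : 'I_n.+1 -> 'rV[int]_r) : Prop :=
  (forall i, L (v i)) /\
  (forall x, L x -> exists c : 'I_n.+1 -> int, x = \sum_(i < n.+1) c i *: v i) /\
  (forall i j, i != j -> dotz (v i) (v j) <= 0) /\
  \sum_(i < n.+1) v i = 0.

Definition irreducible_vec (r : nat) (L : 'rV[int]_r -> Prop) (v : 'rV[int]_r) : Prop :=
  L v /\ v != 0 /\
  (forall x y, L x -> L y -> x != 0 -> y != 0 -> v = x + y -> dotz x y <= -1).

(* Write the obtuse superbase as v_0, ..., v_m, with weights w_ij = - v_i.v_j >= 0
   for i != j.  As the v_i sum to 0,
     2 (sum_i f_i v_i).(sum_i g_i v_i) = sum_ij w_ij (f_i - f_j) (g_i - g_j).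
   Splitting sum_i f_i v_i (f >= 0) into its part supported on {f > 0} and the rest
   therefore gives two summands with nonnegative pairing, so every irreducible vector
   is a 0/1 combination of the v_i.  A changemaker lattice has no vector of norm 1,
   so its vectors of norm 2 (roots) are irreducible.
   Up to z -> -z we may assume z_k > z_{k+2}.  The root x = e_k - e_{k+2} has
   z.x = z_k - z_{k+2}, and z = x + (z - x) forces z.x <= 1.  If z.x = 1, write z and
   the roots t = e_{k+1} - e_{k+2}, a = e_k - e_{k+2}, b = e_{k+1} - e_{k+3} as 0/1
   combinations and group the superbase indices by their 16 membership patterns: every
   pairing of 0/1 combinations of patterns becomes a linear form in the total weights
   between patterns, and the pairings among z, t, a, b together with a few norm and
   irreducibility constraints on such combinations form an infeasible linear system. *)

From mathcomp Require Import all_boot all_order all_algebra.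
From mathcomp Require Import zify ring.
Set Implicit Arguments. Unset Strict Implicit. Unset Printing Implicit Defensive.
Import Order.TTheory GRing.Theory Num.Theory.
Local Open Scope ring_scope.

Section Pairing.
Variable r : nat.
Implicit Types x y u : 'rV[int]_r.

Lemma dotzC x y : dotz x y = dotz y x.
Proof. by apply: eq_bigr => i _; rewrite mulrC. Qed.

Lemma dotzDl x y u : dotz (x + y) u = dotz x u + dotz y u.
Proof. by rewrite /dotz -big_split; apply: eq_bigr => i _; rewrite !mxE mulrDl. Qed.

Lemma dotzZl (c : int) x u : dotz (c *: x) u = c * dotz x u.
Proof. by rewrite /dotz mulr_sumr; apply: eq_bigr => i _; rewrite !mxE mulrA. Qed.

Lemma dotzNl x u : dotz (- x) u = - dotz x u.
Proof. by rewrite -scaleN1r dotzZl mulN1r. Qed.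

Lemma dotz0l u : dotz 0 u = 0.
Proof. by rewrite -(scale0r 0) dotzZl mul0r. Qed.

Lemma dotz_suml (I : finType) (f : I -> 'rV[int]_r) u :
  dotz (\sum_i f i) u = \sum_i dotz (f i) u.
Proof. by elim/big_rec2: _ => [|i a b _ <-]; rewrite ?dotz0l ?dotzDl. Qed.

Lemma dotzDr x y u : dotz u (x + y) = dotz u x + dotz u y.
Proof. by rewrite dotzC dotzDl !(dotzC u). Qed.

Lemma dotzZr (c : int) x u : dotz u (c *: x) = c * dotz u x.
Proof. by rewrite dotzC dotzZl dotzC. Qed.

Lemma dotzNr x u : dotz u (- x) = - dotz u x.
Proof. by rewrite dotzC dotzNl dotzC. Qed.

Lemma dotzBr x y u : dotz u (x - y) = dotz u x - dotz u y.
Proof. by rewrite dotzDr dotzNr. Qed.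

Lemma dotz0r u : dotz u 0 = 0.
Proof. by rewrite dotzC dotz0l. Qed.

Lemma dotz_sumr (I : finType) (f : I -> 'rV[int]_r) u :
  dotz u (\sum_i f i) = \sum_i dotz u (f i).
Proof. by rewrite dotzC dotz_suml; apply: eq_bigr => i _; rewrite dotzC. Qed.

Lemma dotz_eq0 x : (dotz x x == 0) = (x == 0).
Proof.
apply/idP/eqP => [|->]; last by rewrite dotz0l.
rewrite psumr_eq0 => [/allP x0|i _]; last by rewrite -expr2 sqr_ge0.
apply/rowP => i; rewrite mxE.
by apply/eqP; rewrite -sqrf_eq0 expr2; apply: x0; apply: mem_index_enum.
Qed.

Lemma dotz_delta x (l : 'I_r) : dotz x (delta_mx ord0 l) = x ord0 l.
Proof.
rewrite /dotz (bigD1 l) //= mxE !eqxx mulr1 big1 ?addr0 // => j /negPf jl.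
by rewrite mxE jl andbF mulr0.
Qed.

End Pairing.

Lemma orthD r (s x y : 'rV[int]_r) :
  orth_lattice s x -> orth_lattice s y -> orth_lattice s (x + y).
Proof. by rewrite /orth_lattice dotzDl => -> ->; rewrite addr0. Qed.

Lemma orthN r (s x : 'rV[int]_r) : orth_lattice s x -> orth_lattice s (- x).
Proof. by rewrite /orth_lattice dotzNl => ->; rewrite oppr0. Qed.

Lemma orthB r (s x y : 'rV[int]_r) :
  orth_lattice s x -> orth_lattice s y -> orth_lattice s (x - y).
Proof. by move=> ox oy; apply: orthD ox (orthN oy). Qed.

Section Irreducible.
Variables (r : nat) (s : 'rV[int]_r).
Local Notation L := (orth_lattice s).

Lemma irreducible_split z x y : irreducible_vec L z -> L x -> L y -> z = x + y ->
  [\/ x = 0, y = 0 | dotz x y <= -1].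
Proof.
move=> [_ [_ irr]] Lx Ly zxy.
have [->|x0] := eqVneq x 0; first exact: Or31.
have [->|y0] := eqVneq y 0; first exact: Or32.
exact/Or33/irr.
Qed.

Lemma irreducibleN z : irreducible_vec L z -> irreducible_vec L (- z).
Proof.
move=> [Lz [z0 irr]]; split; first exact: orthN.
split=> [|x y Lx Ly x0 y0 zxy]; first by rewrite oppr_eq0.
have := irr (- x) (- y) (orthN Lx) (orthN Ly); rewrite !oppr_eq0 dotzNl dotzNr opprK.
by apply=> //; rewrite -opprD -zxy opprK.
Qed.

Hypothesis no_norm1 : forall x, L x -> dotz x x != 1.

Lemma orth_norm_ge2 x : L x -> x != 0 -> 2 <= dotz x x.
Proof.
move=> Lx x0; have := no_norm1 Lx; rewrite -dotz_eq0 in x0.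
have : 0 <= dotz x x by apply: sumr_ge0 => i _; rewrite -expr2 sqr_ge0.
lia.
Qed.

Lemma root_irreducible x : L x -> dotz x x = 2 -> irreducible_vec L x.
Proof.
move=> Lx xx; split=> //; split=> [|y u Ly Lu y0 u0 xyu].
  by rewrite -dotz_eq0 xx.
have := orth_norm_ge2 Ly y0; have := orth_norm_ge2 Lu u0.
move: xx; rewrite xyu dotzDl !dotzDr (dotzC u y); lia.
Qed.

Lemma irreducible_dotz_root_le1 z x : irreducible_vec L z -> L x -> dotz x x = 2 ->
  z != x -> dotz z x <= 1.
Proof.
move=> irrz Lx xx zx; rewrite leNgt; apply/negP => zx2.
have zxx : z = x + (z - x) by rewrite addrC subrK.
case: (irreducible_split irrz Lx (orthB irrz.1 Lx) zxx) => [x0|/eqP|].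
- by move: xx; rewrite x0 dotz0l.
- by rewrite subr_eq0 (negPf zx).
- by rewrite dotzBr (dotzC x z) xx; lia.
Qed.

End Irreducible.

Lemma changemaker_gt0 r (s : 'rV[int]_r) : changemaker s -> forall l, 0 < s ord0 l.
Proof.
move=> [s0 step]; suff gt0 k (l : 'I_r) : val l = k -> 0 < s ord0 l.
  by move=> l; apply: gt0 _ l erefl.
elim: k l => [|k IH] l lk; first by rewrite s0.
have kr : (k < r)%N by apply: ltnW; rewrite -lk ltn_ord.
exact: lt_le_trans (IH (Ordinal kr) erefl) (step (Ordinal kr) l lk).1.
Qed.

Lemma changemaker_norm_neq1 r (s : 'rV[int]_r) : changemaker s ->
  forall x, orth_lattice s x -> dotz x x != 1.
Proof.
move=> cm x Lx; apply/eqP => xx1.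
have x0 : x != 0 by rewrite -dotz_eq0 xx1.
have [l xl] : exists l, x ord0 l != 0.
  apply/existsP; apply: contraNT x0 => /existsPn xl; apply/eqP/rowP => l.
  by rewrite mxE; apply/eqP/negbNE/xl.
have sq_ge0 j : 0 <= x ord0 j * x ord0 j by rewrite -expr2 sqr_ge0.
have rest : \sum_(j | j != l) x ord0 j * x ord0 j = 1 - x ord0 l * x ord0 l.
  by move: xx1; rewrite /dotz (bigD1 l) //= => <-; rewrite addrC addrK.
have /eqP : \sum_(j | j != l) x ord0 j * x ord0 j = 0.
  have : 0 <= \sum_(j | j != l) x ord0 j * x ord0 j by apply: sumr_ge0.
  rewrite rest; move: xl; nia.
rewrite psumr_eq0 => [/allP xj0|j _ //].
move/eqP: Lx; rewrite /dotz (bigD1 l) //= big1 ?addr0 => [|j jl]; last first.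
  by have := xj0 j (mem_index_enum j); rewrite jl mulf_eq0 orbb => /eqP ->; rewrite mul0r.
by rewrite mulf_eq0 (negPf xl) gt_eqF ?(changemaker_gt0 cm).
Qed.

Lemma sum_by_type (I : finType) n (tau : I -> nat) (F : I -> nat -> int) :
  (forall i, tau i < n)%N ->
  \sum_i F i (tau i) = \sum_(0 <= k < n) \sum_(i | tau i == k) F i k.
Proof.
move=> tau_lt; rewrite [RHS](exchange_big_dep predT) //=; apply: eq_bigr => i _.
rewrite (eq_bigl (fun k => k == tau i)) => [|k]; last by rewrite eq_sym.
by rewrite big_nat1_eq leq0n tau_lt.
Qed.

Lemma sum_upper_triangle n (Y : nat -> nat -> int) :
  (forall k l, Y k l = Y l k) -> (forall k, Y k k = 0) ->
  \sum_(0 <= k < n) \sum_(0 <= l < n) Y k l =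
  2 * \sum_(0 <= k < n) \sum_(0 <= l < n) (if (k < l)%N then Y k l else 0).
Proof.
move=> Ysym Y0.
have split_kl k l :
    Y k l = (if (k < l)%N then Y k l else 0) + (if (l < k)%N then Y l k else 0).
  by case: ltngtP => [||->]; rewrite ?addr0 ?add0r ?Y0 // => _; rewrite Ysym.
under eq_bigr do under eq_bigr do rewrite split_kl.
under eq_bigr do rewrite big_split /=.
by rewrite big_split /= [X in _ + X]exchange_big /= mulr2n mulrDl mul1r.
Qed.

Definition type_form n (W : nat -> nat -> int) (F G : nat -> int) : int :=
  \sum_(0 <= k < n) \sum_(0 <= l < n)
    (if (k < l)%N then W k l * ((F k - F l) * (G k - G l)) else 0).

(* A type t < 16 stands for four bits (membership in the supports of z, t, a, b);
   [pattern P] is the 0/1 function on types given by the Boolean formula P. *)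
Definition bitn (k t : nat) : bool := odd (iter k half t).

Definition pattern (P : bool -> bool -> bool -> bool -> bool) (t : nat) : int :=
  P (bitn 0 t) (bitn 1 t) (bitn 2 t) (bitn 3 t).

Definition code4 (b0 b1 b2 b3 : bool) : nat := b0 + 2 * b1 + 4 * b2 + 8 * b3.

Lemma code4_lt16 b0 b1 b2 b3 : (code4 b0 b1 b2 b3 < 16)%N.
Proof. by case: b0; case: b1; case: b2; case: b3. Qed.

Lemma pattern_code4 P b0 b1 b2 b3 : pattern P (code4 b0 b1 b2 b3) = P b0 b1 b2 b3.
Proof. by case: b0; case: b1; case: b2; case: b3. Qed.

Local Notation pz := (pattern (fun z _ _ _ => z)).
Local Notation pt := (pattern (fun _ t _ _ => t)).
Local Notation pa := (pattern (fun _ _ a _ => a)).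
Local Notation pb := (pattern (fun _ _ _ b => b)).
Local Notation zpart P := (pattern (fun z t a b => z && P t a b)).
Local Notation zcopart P := (pattern (fun z t a b => z && ~~ P t a b)).

Lemma type_weights_infeasible (W : nat -> nat -> int) :
  (forall k l, (k < l)%N -> 0 <= W k l) ->
  let form := type_form 16 W in
  form pt pt = 2 -> form pa pa = 2 -> form pb pb = 2 ->
  form pa pt = 1 -> form pb pt = 1 -> form pa pb = 0 ->
  form pz pt = 1 -> form pz pa = 1 -> form pz pb = 1 ->
  (forall P, form (pattern P) (pattern P) <> 1) ->
  (forall P, let x := zpart P in let y := zcopart P in
     form x x = 0 \/ form y y = 0 \/ form x y <= -1) ->
  False.
Proof.
move=> W_ge0 form htt haa hbb hat hbt hab hzt hza hzb no_norm1 irr.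
have n1 := no_norm1 (fun _ t _ b => b && ~~ t).
have n2 := no_norm1 (fun _ t a b => a && ~~ t && ~~ b).
have n3 := no_norm1 (fun _ t a b => ~~ a && (t (+) b)).
have s1 := irr (fun t _ b => t (+) b).
have s2 := irr (fun t a b => (t (+) a) && ~~ (a && b)).
have s3 := irr (fun t a b => a && ~~ (t && b)).
rewrite /form /type_form /pattern unlock /=
  in htt haa hbb hat hbt hab hzt hza hzb n1 n2 n3 s1 s2 s3.
(* Every weight [W k l] with [k < l] occurs in [htt]. *)
let rec weights_ge0 e := lazymatch e with
  | ?e1 + ?e2 => weights_ge0 e1; weights_ge0 e2
  | W ?k ?l * _ => move: (W_ge0 k l erefl)
  | _ => idtac end in
lazymatch type of htt with ?e = _ => weights_ge0 e end.
lia.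
Qed.

Definition rootv r (a b : 'I_r) : 'rV[int]_r := delta_mx ord0 a - delta_mx ord0 b.

Lemma rootv_entry r (a b c : 'I_r) : rootv a b ord0 c = (c == a)%:R - (c == b)%:R.
Proof. by rewrite !mxE eqxx. Qed.

Lemma dotz_rootv r (x : 'rV[int]_r) a b : dotz x (rootv a b) = x ord0 a - x ord0 b.
Proof. by rewrite dotzBr !dotz_delta. Qed.

Lemma orth_rootv r (s : 'rV[int]_r) a b :
  s ord0 a = s ord0 b -> orth_lattice s (rootv a b).
Proof. by rewrite /orth_lattice dotzC dotz_rootv => ->; rewrite subrr. Qed.

Section ObtuseSuperbase.
Variables (r m : nat) (s : 'rV[int]_r) (v : 'I_m -> 'rV[int]_r).
Local Notation L := (orth_lattice s).
Hypothesis v_orth : forall i, L (v i).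
Hypothesis v_span : forall x, L x -> exists c : 'I_m -> int, x = \sum_i c i *: v i.
Hypothesis v_obtuse : forall i j, i != j -> dotz (v i) (v j) <= 0.
Hypothesis v_sum0 : \sum_i v i = 0.

Definition comb (f : 'I_m -> int) : 'rV[int]_r := \sum_i f i *: v i.

Lemma orth_comb f : L (comb f).
Proof.
by rewrite /orth_lattice dotz_suml big1 // => i _; rewrite dotzZl (v_orth i) mulr0.
Qed.

Lemma combD f g : comb (fun i => f i + g i) = comb f + comb g.
Proof. by rewrite /comb -big_split; apply: eq_bigr => i _; rewrite scalerDl. Qed.

Lemma comb_shift f c : comb (fun i => f i - c) = comb f.
Proof.
rewrite /comb (eq_bigr (fun i => f i *: v i - c *: v i)) => [|i _]; last first.
  by rewrite scalerBl.
by rewrite sumrB -scaler_sumr v_sum0 scaler0 subr0.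
Qed.

Lemma dotz_comb f g :
  2 * dotz (comb f) (comb g) =
  \sum_i \sum_j - dotz (v i) (v j) * ((f i - f j) * (g i - g j)).
Proof.
set G := fun i j => dotz (v i) (v j).
have rows0 i : \sum_j G i j = 0 by rewrite -dotz_sumr v_sum0 dotz0r.
have cols0 j : \sum_i G i j = 0 by rewrite -dotz_suml v_sum0 dotz0l.
have -> : dotz (comb f) (comb g) = \sum_i \sum_j f i * g j * G i j.
  rewrite dotz_suml; apply: eq_bigr => i _; rewrite dotzZl dotz_sumr mulr_sumr.
  by apply: eq_bigr => j _; rewrite dotzZr mulrA.
have cross : \sum_i \sum_j f j * g i * G i j = \sum_i \sum_j f i * g j * G i j.
  by rewrite exchange_big; apply: eq_bigr => i _; apply: eq_bigr => j _; rewrite /G dotzC.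
have diag_l : \sum_i \sum_j f i * g i * G i j = 0.
  by rewrite big1 // => i _; rewrite -mulr_sumr rows0 mulr0.
have diag_r : \sum_i \sum_j f j * g j * G i j = 0.
  by rewrite exchange_big big1 // => j _; rewrite -mulr_sumr cols0 mulr0.
rewrite [RHS](eq_bigr (fun i => \sum_j f i * g j * G i j + \sum_j f j * g i * G i j
    - \sum_j f i * g i * G i j - \sum_j f j * g j * G i j)) => [|i _]; last first.
  by rewrite -big_split -!sumrB; apply: eq_bigr => j _ /=; rewrite /G; ring.
by rewrite !sumrB big_split /= cross diag_l diag_r; ring.
Qed.

Lemma dotz_comb_support f : (forall i, 0 <= f i) ->
  0 <= dotz (comb (fun i => if 0 < f i then 1 else 0))
            (comb (fun i => f i - if 0 < f i then 1 else 0)).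
Proof.
move=> f_ge0; suff : 0 <= 2 * dotz (comb (fun i => if 0 < f i then 1 else 0))
                                   (comb (fun i => f i - if 0 < f i then 1 else 0)).
  by lia.
rewrite dotz_comb; apply: sumr_ge0 => i _; apply: sumr_ge0 => j _.
have [->|ij] := eqVneq i j; first by rewrite !subrr !mul0r mulr0.
apply: mulr_ge0; first by rewrite oppr_ge0 v_obtuse.
by have := f_ge0 i; have := f_ge0 j; case: ifP; case: ifP; nia.
Qed.

Lemma irreducible_comb01 z : irreducible_vec L z ->
  exists p : 'I_m -> bool, z = comb (fun i => p i).
Proof.
move=> irrz.
suff descent n f : (forall i, 0 <= f i <= n%:Z) -> z = comb f ->
    exists p : 'I_m -> bool, z = comb (fun i => p i).
  have [c zc] := v_span irrz.1.
  pose lo := \sum_i `|c i|.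
  have c_le i : `|c i| <= lo.
    by rewrite /lo (bigD1 i) //= lerDl sumr_ge0.
  apply: (descent (absz (2 * lo)) (fun i => c i - - lo)); last by rewrite comb_shift.
  move=> i; have := c_le i; have := ler_norm (c i); have := ler_norm (- c i).
  rewrite normrN abszE; lia.
elim: n f => [|n IH] f f_bd zf.
  exists (fun _ => false); rewrite zf; apply: eq_bigr => i _.
  by have -> : f i = 0 by have := f_bd i; lia.
pose ind i : int := if 0 < f i then 1 else 0.
have zsplit : z = comb ind + comb (fun i => f i - ind i).
  by rewrite -combD zf; apply: eq_bigr => i _; rewrite addrC subrK.
case: (irreducible_split irrz (orth_comb _) (orth_comb _) zsplit) => [ind0|d0|].
- apply: (IH (fun i => f i - ind i)); last by rewrite zsplit ind0 add0r.
  by move=> i; have := f_bd i; rewrite /ind; case: ifP; lia.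
- exists (fun i => 0 < f i); rewrite zsplit d0 addr0.
  by apply: eq_bigr => i _; rewrite /ind; case: ifP.
- have f_ge0 i : 0 <= f i by case/andP: (f_bd i).
  by rewrite /ind /= => neg; have := le_trans (dotz_comb_support f_ge0) neg.
Qed.

Section Types.
Variables (n : nat) (tau : 'I_m -> nat).
Hypothesis tau_lt : forall i, (tau i < n)%N.

Definition type_wt (k l : nat) : int :=
  \sum_(i | tau i == k) \sum_(j | tau j == l) - dotz (v i) (v j).

Lemma type_wtC k l : type_wt k l = type_wt l k.
Proof.
rewrite /type_wt exchange_big; apply: eq_bigr => j _; apply: eq_bigr => i _.
by rewrite dotzC.
Qed.

Lemma type_wt_ge0 k l : k != l -> 0 <= type_wt k l.
Proof.
move=> kl; apply: sumr_ge0 => i /eqP ik; apply: sumr_ge0 => j /eqP jl.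
by rewrite oppr_ge0 v_obtuse //; apply: contraNneq kl => ij; rewrite -ik -jl ij.
Qed.

Lemma dotz_comb_types F G :
  dotz (comb (fun i => F (tau i))) (comb (fun i => G (tau i))) =
  type_form n type_wt F G.
Proof.
pose H k l := (F k - F l) * (G k - G l).
apply: (@mulfI _ 2) => //.
rewrite /type_form -(@sum_upper_triangle n (fun k l => type_wt k l * H k l)); last 2 first.
- by move=> k l; rewrite type_wtC /H; ring.
- by move=> k; rewrite /H !subrr !mul0r mulr0.
rewrite dotz_comb.
transitivity (\sum_i \sum_(0 <= l < n) \sum_(j | tau j == l)
                - dotz (v i) (v j) * H (tau i) l).
  apply: eq_bigr => i _.
  by rewrite (@sum_by_type _ n _ (fun j l => - dotz (v i) (v j) * H (tau i) l)).
rewrite (@sum_by_type _ n _ (fun i k => \sum_(0 <= l < n) \sum_(j | tau j == l)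
                                        - dotz (v i) (v j) * H k l)) //.
apply: eq_bigr => k _; rewrite exchange_big /=; apply: eq_bigr => l _.
rewrite /type_wt mulr_suml; apply: eq_bigr => i _.
by rewrite mulr_suml.
Qed.

End Types.

Hypothesis no_norm1 : forall x, L x -> dotz x x != 1.

Lemma no_irreducible_root_triple z t a b :
  irreducible_vec L z -> L t -> L a -> L b ->
  dotz t t = 2 -> dotz a a = 2 -> dotz b b = 2 ->
  dotz a t = 1 -> dotz b t = 1 -> dotz a b = 0 ->
  dotz z t = 1 -> dotz z a = 1 -> dotz z b = 1 -> False.
Proof.
move=> irrz Lt La Lb htt haa hbb hat hbt hab hzt hza hzb.
have [pz ez] := irreducible_comb01 irrz.
have [pt et] := irreducible_comb01 (root_irreducible no_norm1 Lt htt).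
have [pa ea] := irreducible_comb01 (root_irreducible no_norm1 La haa).
have [pb eb] := irreducible_comb01 (root_irreducible no_norm1 Lb hbb).
pose tau i := code4 (pz i) (pt i) (pa i) (pb i).
have tau_lt i : (tau i < 16)%N by apply: code4_lt16.
have comb_pattern P :
    comb (fun i => pattern P (tau i)) = comb (fun i => P (pz i) (pt i) (pa i) (pb i)).
  by apply: eq_bigr => i _; rewrite pattern_code4.
have form_dotz P Q : type_form 16 (type_wt tau) (pattern P) (pattern Q) =
    dotz (comb (fun i => P (pz i) (pt i) (pa i) (pb i)))
         (comb (fun i => Q (pz i) (pt i) (pa i) (pb i))).
  by rewrite -dotz_comb_types // !comb_pattern.
apply: (type_weights_infeasible (W := type_wt tau)).
- by move=> k l kl; apply: type_wt_ge0; rewrite ltn_eqF.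
all: rewrite /= ?form_dotz -?ez -?et -?ea -?eb //.
- by move=> P; rewrite form_dotz; apply/eqP/no_norm1/orth_comb.
move=> P; rewrite !form_dotz /=.
have zxy : z = comb (fun i => pz i && P (pt i) (pa i) (pb i))
              + comb (fun i => pz i && ~~ P (pt i) (pa i) (pb i)).
  rewrite ez -combD; apply: eq_bigr => i _.
  by case: (pz i); case: (P (pt i) (pa i) (pb i)).
case: (irreducible_split irrz (orth_comb _) (orth_comb _) zxy) => [->|->|];
  rewrite ?dotz0l; auto.
Qed.

Lemma irreducible_block_step_le0 (i0 i1 i2 i3 : 'I_r) z :
  val i1 = (val i0).+1 -> val i2 = (val i1).+1 -> val i3 = (val i2).+1 ->
  s ord0 i0 = s ord0 i1 -> s ord0 i1 = s ord0 i2 -> s ord0 i2 = s ord0 i3 ->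
  irreducible_vec L z -> z ord0 i0 = z ord0 i1 -> z ord0 i2 = z ord0 i3 ->
  z ord0 i0 <= z ord0 i2.
Proof.
move=> h01 h12 h23 s01 s12 s23 irrz z01 z23.
have ne (c d : 'I_r) : (val c < val d)%N -> ((c == d) = false) * ((d == c) = false).
  by move=> cd; rewrite -!val_eqE ltn_eqF // gtn_eqF.
have neqs := (ne i0 i1 ltac:(lia), ne i0 i2 ltac:(lia), ne i0 i3 ltac:(lia),
              ne i1 i2 ltac:(lia), ne i1 i3 ltac:(lia), ne i2 i3 ltac:(lia)).
pose a := rootv i0 i2; pose t := rootv i1 i2; pose b := rootv i1 i3.
have La : L a by apply: orth_rootv; rewrite s01 s12.
have Lt : L t by apply: orth_rootv.
have Lb : L b by apply: orth_rootv; rewrite s12 s23.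
have haa : dotz a a = 2 by rewrite dotz_rootv !rootv_entry !eqxx !neqs.
have za_le1 : dotz z a <= 1.
  apply: (irreducible_dotz_root_le1 irrz La haa); apply/eqP => za.
  by move: z01; rewrite za !rootv_entry !eqxx !neqs => /eqP.
rewrite leNgt; apply/negP => z20; move: za_le1; rewrite dotz_rootv => za_le1.
apply: (no_irreducible_root_triple irrz Lt La Lb).
all: rewrite ?dotz_rootv ?rootv_entry ?eqxx ?neqs //; lia.
Qed.

End ObtuseSuperbase.

Unset Implicit Arguments. Set Strict Implicit.

Theorem proposition4p8 (r : nat) (s : 'rV[int]_r) (hr : (0 < r)%N)
  (hcm : changemaker s)
  (hlast : forall i : 'I_r, val i = r.-1 -> 2 <= s ord0 i)
  (hsb : exists v : 'I_(r.-1).+1 -> 'rV[int]_r,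
           obtuse_superbase (orth_lattice s) v)
  (i0 i1 i2 i3 : 'I_r)
  (h01 : val i1 = (val i0).+1) (h12 : val i2 = (val i1).+1)
  (h23 : val i3 = (val i2).+1)
  (hs01 : s ord0 i0 = s ord0 i1) (hs12 : s ord0 i1 = s ord0 i2)
  (hs23 : s ord0 i2 = s ord0 i3)
  (z : 'rV[int]_r) (hz : irreducible_vec (orth_lattice s) z)
  (hz01 : z ord0 i0 = z ord0 i1) (hz23 : z ord0 i2 = z ord0 i3) :
  z ord0 i2 = z ord0 i1.
Proof.
have [v [v_orth [v_span [v_obtuse v_sum0]]]] := hsb.
have step := irreducible_block_step_le0 v_orth v_span v_obtuse v_sum0
  (changemaker_norm_neq1 hcm) h01 h12 h23 hs01 hs12 hs23.
have := step z hz hz01 hz23.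
have := step (- z) (irreducibleN hz); rewrite !mxE.
move=> /(_ (congr1 -%R hz01) (congr1 -%R hz23)).
rewrite lerN2 -hz01 => z20 z02.
by apply/eqP; rewrite eq_le z20 z02.
Qed.
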